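(* Let $n\ge 2$. The $V_n$-graded Hilbert functions of the $R/J_n$-modules $\langle p_n\rangle$ and $\langle p^+_{n,i}\rangle$, $i=1,\dots,n$, take only the values $0$ and $1$.
   Context: Let $\mathbbm{k}$ be a field, $[n]=\{1,\dots,n\}$, $R=\mathbbm{k}[x_{ij}:1\le i\le j\le n]$ with $x_{ij}=x_{ji}$; exponent vectors in $\mathbb{N}^{\binom{n+1}{2}}$ with basis $e_{ij}=e_{ji}$. $V_n$ is the $n\times\binom{n+1}{2}$ matrix whose column indexed by $jk$ is $e_j+e_k\in\mathbb{Z}^n$; $R$ is $\mathbb{N}^n$-graded by $\deg x_{jk}=e_j+e_k$ (the $V_n$-grading), and the $V_n$-graded Hilbert function of a graded module $M$ is $\mathbf b\mapsto\dim_{\mathbbm{k}}M_{\mathbf b}$. For $\mathbf b\in\mathbb{N}^n$, $V_n^{-1}[\mathbf b]=\{u\in\mathbb{N}^{\binom{n+1}{2}}:V_nu=\mathbf b\}$. $J_n$ is the ($V_n$-homogeneous) ideal generated by the principal $2$-minors $x_{ii}x_{jj}-x_{ij}^2$. With $[ij|kl]:=e_{ik}+e_{jl}-e_{il}-e_{jk}$, $L'_n$ is the lattice generated by the $[ij|ij]$; two points of a fiber are equivalent if their difference lies in $L'_n$. Define $p_n=\prod_{1\le i<j\le n-1}(x_{ij}x_{nn}+x_{in}x_{jn})$. If $n$ is odd, $p^+_{n,i}\in R/J_n$ is the sum of $x^{\mathbf a}$ over the equivalence classes $\mathbf a$ of $V_n^{-1}[(n-2,\dots,n-2)+e_i]$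 modulo $L'_n$; if $n$ is even, $p^+_{n,i}:=p^+_n$ for all $i$, the sum of $x^{\mathbf a}$ over the equivalence classes of $V_n^{-1}[(n-2,\dots,n-2)]$ modulo $L'_n$. *)

From HB Require Import structures.
From mathcomp Require Import all_boot all_order all_algebra.
From mathcomp Require Import mpoly.
Set Implicit Arguments. Unset Strict Implicit. Unset Printing Implicit Defensive.
Import Order.TTheory GRing.Theory Num.Theory.
Local Open Scope ring_scope.

(* Index set of the variables x_{ij} = x_{ji}, 1 <= i <= j <= n, written
   0-based: unordered pairs {i,j} of 'I_n represented as (i,j) with i <= j. *)
Definition vidx (n : nat) := {p : 'I_n * 'I_n | (p.1 <= p.2)%N}.

Definition nvar (n : nat) : nat := #|{: vidx n}|.

Notation R K n := ({mpoly K[nvar n]}).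
Notation mono n := ('X_{1..nvar n}).

Definition is_pair n (t : vidx n) (i j : nat) : bool :=
  (((val t).1 : nat) == minn i j) && (((val t).2 : nat) == maxn i j).

(* x_{ij} (= x_{ji}); 0-based indices; equals 0 if i or j >= n (never used so) *)
Definition x (K : fieldType) (n : nat) (i j : nat) : R K n :=
  \sum_(t : vidx n | is_pair t i j) 'X_(enum_rank t).

Definition vdeg n (u : mono n) (k : 'I_n) : nat :=
  \sum_(t : vidx n) u (enum_rank t) * (((val t).1 == k) + ((val t).2 == k))%N.

Definition vhomog (K : fieldType) (n : nat) (b : 'I_n -> nat) (f : R K n) : Prop :=
  forall u : mono n, f@_u != 0 -> forall k, vdeg u k = b k.

Definition minor2 (K : fieldType) (n : nat) (i j : nat) : R K n :=
  x K n i i * x K n j j - x K n i j ^+ 2.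

Definition inJ (K : fieldType) (n : nat) (f : R K n) : Prop :=
  exists c : 'I_n -> 'I_n -> R K n,
    f = \sum_(i < n) \sum_(j < n | (i < j)%N) c i j * minor2 K n i j.

(* f represents an element of the R/J_n-submodule <p> of R/J_n,
   i.e. f in pR + J_n *)
Definition inGen (K : fieldType) (n : nat) (p f : R K n) : Prop :=
  exists a g : R K n, f = a * p + g /\ inJ g.

Definition indep_family (K : fieldType) (n : nat) (p : R K n) (b : 'I_n -> nat) (d : nat)
    (f : 'I_d -> R K n) : Prop :=
  (forall l, vhomog b (f l) /\ inGen p (f l)) /\
  (forall c : 'I_d -> K, inJ (\sum_(l < d) c l *: f l) -> forall l, c l = 0).

(* V_n-graded Hilbert function of the R/J_n-module <p> (p homogeneous):
   hilb p b h  <->  dim_k <p>_b = h, the dimension being the maximal size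
   of a linearly independent family in <p>_b. *)
Definition hilb (K : fieldType) (n : nat) (p : R K n) (b : 'I_n -> nat) (h : nat) : Prop :=
  (exists f : 'I_h -> R K n, indep_family p b f) /\
  ~ (exists f : 'I_h.+1 -> R K n, indep_family p b f).

Definition hilb01 (K : fieldType) (n : nat) (p : R K n) : Prop :=
  forall b : 'I_n -> nat, hilb p b 0 \/ hilb p b 1.

(* p_n = prod_{1 <= i < j <= n-1} (x_ij x_nn + x_in x_jn)  (0-based below) *)
Definition pn (K : fieldType) (n : nat) : R K n :=
  \prod_(0 <= j < n.-1) \prod_(0 <= i < j)
     (x K n i j * x K n n.-1 n.-1 + x K n i n.-1 * x K n j n.-1).

Definition brk n (i j : 'I_n) (t : vidx n) : int :=
  (is_pair t i i)%:Z + (is_pair t j j)%:Z - (is_pair t i j)%:Z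
  - (is_pair t j i)%:Z.

(* u ~ v  iff  u - v in L'_n (the lattice generated by the [ij|ij]) *)
Definition equivL n (u v : mono n) : Prop :=
  exists c : 'I_n -> 'I_n -> int, forall t : vidx n,
    (u (enum_rank t))%:Z - (v (enum_rank t))%:Z
    = \sum_(i < n) \sum_(j < n) c i j * brk i j t.

Definition in_fiber n (b : 'I_n -> nat) (u : mono n) : Prop :=
  forall k, vdeg u k = b k.

(* S is a set of representatives of the classes of V_n^{-1}[b] modulo L'_n;
   then sum_{s in S} x^s is the sum of x^a over the classes a (well defined
   in R/J_n). *)
Definition class_reps n (b : 'I_n -> nat) (S : seq (mono n)) : Prop :=
  [/\ uniq S, forall s, s \in S -> in_fiber b s,
      forall u, in_fiber b u -> exists2 s, s \in S & equivL u s
    & forall s t, s \in S -> t \in S -> equivL s t -> s = t].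

(* the degree of p^+_{n,i}: (n-2,...,n-2) + e_i if n odd, (n-2,...,n-2)
   if n even *)
Definition plus_deg n (i : 'I_n) : 'I_n -> nat :=
  fun k => if odd n then (n - 2 + (k == i))%N else (n - 2)%N.

(* Modulo J_n one may replace x_ij^2 by x_ii x_jj.  These moves lower the
   off-diagonal degree while preserving the V_n-degree and the parities of the
   off-diagonal exponents, and a monomial whose off-diagonal exponents are 0 or
   1 is determined by these data.  Hence monomials with the same degree and the
   same off-diagonal parities are congruent modulo J_n and equivalent modulo L'_n.
   If p is homogeneous and x^u p = x^v p in R/J_n whenever x^u and x^v have the
   same degree, then every element of <p>_b is a scalar multiple of a single
   x^w p, so dim <p>_b <= 1.
   For p_n, each factor x_ij x_nn + x_in x_jn is a sum of two monomials of equal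
   degree whose parities differ exactly at x_ij; distributing the product over
   x^u - x^v absorbs every parity discrepancy off the last column, and the
   parities in the last column are forced by the degree.
   For p^+_{n,i}, multiplication by x^u or by x^v permutes the classes of the
   fiber, because in degree at least (n-2,...,n-2) every pattern of off-diagonal
   parities compatible with the degree is realised. *)

From HB Require Import structures.
From mathcomp Require Import all_boot all_order all_algebra.
From mathcomp Require Import mpoly.
From mathcomp Require Import zify ring.
From Stdlib Require Import Classical_Prop.
Set Implicit Arguments. Unset Strict Implicit. Unset Printing Implicit Defensive.
Import Order.TTheory GRing.Theory Num.Theory.

Lemma odd_sum (I : Type) (r : seq I) (P : pred I) (F : I -> nat) :
  odd (\sum_(l <- r | P l) F l) = \big[addb/false]_(l <- r | P l) odd (F l).
Proof. exact: (big_morph odd oddD). Qed.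

Section Monomials.
Variable n : nat.
Implicit Types (i j k a c : 'I_n) (t : vidx n) (u v w : 'X_{1..nvar n}).

Definition slot t : 'I_(nvar n) := enum_rank t.

Lemma pair_of_subproof i j :
  let p := if (i <= j)%N then (i, j) else (j, i) in (p.1 <= p.2)%N.
Proof. by case: leqP => // /ltnW. Qed.

Definition pair_of i j : vidx n :=
  exist (fun p : 'I_n * 'I_n => (p.1 <= p.2)%N) _ (pair_of_subproof i j).

Definition xexp u i j : nat := u (slot (pair_of i j)).

Lemma pair_ofE i j : val (pair_of i j) = if (i <= j)%N then (i, j) else (j, i).
Proof. by []. Qed.

Lemma vidx_eqE t t' :
  (t == t') = ((val t).1 == (val t').1) && ((val t).2 == (val t').2).
Proof. by rewrite -val_eqE. Qed.

Lemma pair_of_eq i j a c :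
  (pair_of i j == pair_of a c) = (i == a) && (j == c) || (i == c) && (j == a).
Proof. by rewrite vidx_eqE !pair_ofE; do 2 case: leqP => ? /=; rewrite -?val_eqE /=; lia. Qed.

Lemma pair_ofC i j : pair_of i j = pair_of j i.
Proof. by apply/eqP; rewrite pair_of_eq !eqxx orbT. Qed.

Lemma pair_of_val t : pair_of (val t).1 (val t).2 = t.
Proof. by apply: val_inj; rewrite pair_ofE; case: t => -[a b] /= ->. Qed.

Lemma is_pairE t i j : is_pair t i j = (t == pair_of i j).
Proof. by rewrite vidx_eqE pair_ofE /is_pair; case: leqP => ? /=; rewrite -?val_eqE /=; lia. Qed.

Lemma xexpC u i j : xexp u i j = xexp u j i.
Proof. by rewrite /xexp pair_ofC. Qed.

Lemma pair_of_ends k c :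
  ((val (pair_of k c)).1 == k) + ((val (pair_of k c)).2 == k) = (1 + (c == k))%N.
Proof. by rewrite pair_ofE; case: leqP => /= ?; rewrite eqxx -?val_eqE /=; lia. Qed.

Lemma sum_incident (F : vidx n -> nat) k :
  \sum_t F t * (((val t).1 == k) + ((val t).2 == k)) =
  \sum_c F (pair_of k c) * (1 + (c == k)).
Proof.
pose other t := if (val t).1 == k then (val t).2 else (val t).1.
pose incident t := ((val t).1 == k) || ((val t).2 == k).
rewrite (bigID incident) /= [X in _ + X]big1 ?addn0; last first.
  by move=> t /norP[/negbTE-> /negbTE->]; rewrite muln0.
rewrite (reindex_onto (pair_of k) other); last first.
  move=> [[a b] /= ab]; rewrite /other /incident /= => inc.
  apply: val_inj; rewrite pair_ofE; move: inc.
  case: eqP => [<-|/eqP ne] /=; first by rewrite ab.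
  move/eqP=> bk; rewrite -bk in ne *.
  by rewrite ifN // -ltnNge ltn_neqAle ab andbT.
rewrite (eq_bigl predT); last first.
  move=> c; rewrite /incident /other pair_ofE.
  case: leqP => [_|ck] /=; rewrite !eqxx ?orbT //.
  by rewrite (ltn_eqF ck : (c == k :> 'I_n) = false) eqxx.
by apply: eq_bigr => c _; congr (_ * _); apply: pair_of_ends.
Qed.

Lemma vdegE u k : vdeg u k = (xexp u k k).*2 + \sum_(c | c != k) xexp u k c.
Proof.
rewrite /vdeg sum_incident (eq_bigr (fun c => xexp u k c + xexp u k c * (c == k))); last first.
  by move=> c _; rewrite mulnDr muln1.
have diag : \sum_c xexp u k c * (c == k) = xexp u k k.
  by rewrite (bigD1 k) //= eqxx muln1 big1 ?addn0 // => c /negbTE->; rewrite muln0.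
by rewrite big_split /= diag (bigD1 k) //= addnAC -addnn.
Qed.

Lemma odd_vdeg u k : odd (vdeg u k) = odd (\sum_(c | c != k) xexp u k c).
Proof. by rewrite vdegE oddD odd_double. Qed.

Lemma xexp_ext u v : (forall i j, xexp u i j = xexp v i j) -> u = v.
Proof.
move=> uv; apply/mnmP => s; rewrite -(enum_valK s) -(pair_of_val (enum_val s)).
exact: uv.
Qed.

Lemma vdegD u v k : vdeg (u + v)%MM k = vdeg u k + vdeg v k.
Proof. by rewrite /vdeg -big_split; apply: eq_bigr => t _; rewrite mnmDE mulnDl. Qed.

Lemma xexpD u v i j : xexp (u + v)%MM i j = xexp u i j + xexp v i j.
Proof. exact: mnmDE. Qed.

Lemma xexp_unit t i j : xexp U_(slot t) i j = (t == pair_of i j).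
Proof. by rewrite /xexp mnm1E (inj_eq enum_rank_inj). Qed.

Lemma vdeg_unit i j k : vdeg U_(slot (pair_of i j)) k = (i == k) + (j == k).
Proof.
rewrite /vdeg (bigD1 (pair_of i j)) // big1 ?addn0 => [|t ne]; last first.
  by rewrite mnm1E (inj_eq enum_rank_inj) eq_sym (negbTE ne).
by rewrite mnm1E eqxx mul1n pair_ofE; case: leqP => _ /=; rewrite addn0 // addnC.
Qed.

Lemma pair_of_offdiag i j :
  ((val (pair_of i j)).1 != (val (pair_of i j)).2) = (i != j).
Proof. by rewrite pair_ofE; case: leqP => _ //; rewrite eq_sym. Qed.

Definition offdeg u : nat := \sum_(t | (val t).1 != (val t).2) u (slot t).

Lemma offdegD u v : offdeg (u + v)%MM = offdeg u + offdeg v.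
Proof. by rewrite /offdeg -big_split; apply: eq_bigr => t _; rewrite mnmDE. Qed.

Lemma offdeg_unit i j : offdeg U_(slot (pair_of i j)) = (i != j).
Proof.
rewrite /offdeg; case: (boolP (i != j)) => ij.
  rewrite (bigD1 (pair_of i j)) ?pair_of_offdiag // mnm1E eqxx big1 ?addn0 // => t.
  by case/andP=> _ ne; rewrite mnm1E (inj_eq enum_rank_inj) eq_sym (negbTE ne).
rewrite big1 // => t off; rewrite mnm1E (inj_eq enum_rank_inj).
suff /negbTE-> : pair_of i j != t by [].
by apply/eqP => e; move: off; rewrite -e pair_of_offdiag (negbTE ij).
Qed.

Definition sq_mono i j := (U_(slot (pair_of i j)) + U_(slot (pair_of i j)))%MM.
Definition diag_mono i j := (U_(slot (pair_of i i)) + U_(slot (pair_of j j)))%MM.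

Lemma vdeg_diag_sq i j : vdeg (diag_mono i j) =1 vdeg (sq_mono i j).
Proof. by move=> k; rewrite !vdegD !vdeg_unit; lia. Qed.

Lemma odd_xexp_sq i j a c : odd (xexp (sq_mono i j) a c) = false.
Proof. by rewrite xexpD addnn odd_double. Qed.

Lemma xexp_diag i j a c : a != c -> xexp (diag_mono i j) a c = 0.
Proof.
move=> ac; have off k : (pair_of k k == pair_of a c) = false.
  by rewrite pair_of_eq; apply: contraNF ac => /orP[] /andP[/eqP<- /eqP<-].
by rewrite xexpD !xexp_unit !off.
Qed.

Definition parity_equiv u v :=
  vdeg u =1 vdeg v /\ forall i j, (i < j)%N -> odd (xexp u i j) = odd (xexp v i j).

Lemma parity_equiv_sym u v : parity_equiv u v -> parity_equiv v u.
Proof. by case=> uv puv; split=> [k|i j ij]; rewrite ?uv ?puv. Qed.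

Lemma parity_equiv_trans u w v :
  parity_equiv u w -> parity_equiv w v -> parity_equiv u v.
Proof. by case=> uw puw [wv pwv]; split=> [k|i j ij]; rewrite ?uw ?wv ?puw ?pwv. Qed.

Lemma parity_equiv_move w i j : (i < j)%N ->
  parity_equiv (w + sq_mono i j)%MM (w + diag_mono i j)%MM.
Proof.
move=> ij; split=> [k|a c ac]; first by rewrite !(vdegD w) vdeg_diag_sq.
by rewrite !(xexpD w) oddD odd_xexp_sq xexp_diag ?addn0 ?addbF // neq_ltn ac.
Qed.

Lemma offdeg_move w i j : (i < j)%N ->
  (offdeg (w + diag_mono i j) < offdeg (w + sq_mono i j))%N.
Proof.
move=> ij; have ij' : i != j by rewrite neq_ltn ij.
by rewrite !offdegD !offdeg_unit ij' !eqxx; lia.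
Qed.

Lemma sq_mono_split u i j : (1 < xexp u i j)%N -> u = (u - sq_mono i j + sq_mono i j)%MM.
Proof.
move=> u2; rewrite submK //; apply/mnm_lepP => s.
by rewrite mnmDE mnm1E; case: eqP => [<-|] //=; lia.
Qed.

Definition offdiag_le1 u := forall i j, (i < j)%N -> (xexp u i j <= 1)%N.

Lemma parity_equiv_offdiag_le1 u v :
  parity_equiv u v -> offdiag_le1 u -> offdiag_le1 v -> u = v.
Proof.
move=> [uv puv] u1 v1.
have lt a c : (a < c)%N -> xexp u a c = xexp v a c.
  move=> ac; have := puv a c ac; have := u1 a c ac; have := v1 a c ac.
  by case: (xexp u a c) => [|[|]]; case: (xexp v a c) => [|[|]].
have off a c : a != c -> xexp u a c = xexp v a c.
  by rewrite neq_ltn => /orP[/lt //|/lt]; rewrite xexpC (xexpC v).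
apply: xexp_ext => a c; have [<-|/off //] := eqVneq a c.
have := uv a; rewrite !vdegE (eq_bigr (fun c => xexp v a c)) => [/addIn/double_inj //|d da].
by rewrite off // eq_sym.
Qed.

Section MoveClosure.
Variable P : 'X_{1..nvar n} -> 'X_{1..nvar n} -> Prop.
Hypothesis P_refl : forall u, P u u.
Hypothesis P_sym : forall u v, P u v -> P v u.
Hypothesis P_trans : forall u w v, P u w -> P w v -> P u v.
Hypothesis P_move : forall w i j, (i < j)%N -> P (w + sq_mono i j)%MM (w + diag_mono i j)%MM.

Lemma reduce_offdiag u : exists u', [/\ parity_equiv u u', offdiag_le1 u' & P u u'].
Proof.
have [N] := ubnP (offdeg u); elim: N u => // N IH u ltN.
case: (pickP (fun p : 'I_n * 'I_n => (p.1 < p.2)%N && (1 < xexp u p.1 p.2)%N)).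
  move=> [i j] /andP[/= ij /sq_mono_split uE]; set w := (u - sq_mono i j)%MM in uE.
  have [|u' [pe' le1' Pu']] := IH (w + diag_mono i j)%MM.
    by move: ltN; rewrite uE; apply: leq_trans (offdeg_move w ij).
  exists u'; rewrite uE; split=> //; first exact: parity_equiv_trans (parity_equiv_move w ij) pe'.
  exact: P_trans (P_move w ij) Pu'.
move=> small; exists u; split=> //.
by move=> i j ij; have := small (i, j); rewrite /= ij /= ltnNge => /negbFE.
Qed.

Lemma parity_equiv_closure u v : parity_equiv u v -> P u v.
Proof.
move=> uv; have [u' [uu' u'1 Puu']] := reduce_offdiag u.
have [v' [vv' v'1 Pvv']] := reduce_offdiag v.
have u'v' : u' = v'.
  apply: parity_equiv_offdiag_le1 u'1 v'1.
  exact: parity_equiv_trans (parity_equiv_sym uu') (parity_equiv_trans uv vv').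
by apply: P_trans Puu' _; rewrite u'v'; apply: P_sym.
Qed.

End MoveClosure.

End Monomials.

Section Lattice.
Variable n : nat.
Implicit Types (i j a c : 'I_n) (t : vidx n) (u v w : 'X_{1..nvar n}).
Local Open Scope ring_scope.

Lemma sum_point (R : ringType) m (P : 'I_m -> 'I_m -> bool) (e : R) G (i j : 'I_m) :
  P i j ->
  \sum_(a < m) \sum_(c < m | P a c) (if (a == i) && (c == j) then e else 0) * G a c
  = e * G i j.
Proof.
move=> Pij; rewrite (bigD1 i) //= (bigD1 j) //= !eqxx big1 => [|c /andP[_ /negbTE->]].
  rewrite addr0 big1 ?addr0 // => a /negbTE ai.
  by rewrite big1 // => c _; rewrite ai mul0r.
by rewrite andbF mul0r.
Qed.

Lemma equivL_refl u : equivL u u.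
Proof.
exists (fun _ _ => 0) => t; rewrite subrr big1 // => i _.
by rewrite big1 // => j _; rewrite mul0r.
Qed.

Lemma equivL_sym u v : equivL u v -> equivL v u.
Proof.
move=> [c uv]; exists (fun i j => - c i j) => t.
rewrite -opprB uv -sumrN; apply: eq_bigr => i _; rewrite -sumrN.
by apply: eq_bigr => j _; rewrite mulNr.
Qed.

Lemma equivL_trans u w v : equivL u w -> equivL w v -> equivL u v.
Proof.
move=> [c uw] [d wv]; exists (fun i j => c i j + d i j) => t.
rewrite -[LHS](subrKA (w (slot t))%:Z) uw wv -big_split; apply: eq_bigr => i _.
by rewrite -big_split; apply: eq_bigr => j _; rewrite mulrDl.
Qed.

Lemma brkE i j t : brk i j t =
  (t == pair_of i i)%:Z + (t == pair_of j j)%:Z - (t == pair_of i j)%:Z *+ 2.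
Proof. by rewrite /brk !is_pairE (pair_ofC j i) mulr2n opprD addrA. Qed.

Lemma equivL_move w i j : (i < j)%N ->
  equivL (w + sq_mono i j)%MM (w + diag_mono i j)%MM.
Proof.
move=> ij; exists (fun a c => if (a == i) && (c == j) then -1 else 0) => t.
rewrite (sum_point (P := fun _ _ => true)) // mulN1r brkE !mnmDE !mnm1E.
by rewrite !(inj_eq enum_rank_inj) !(eq_sym _ t) !PoszD; lia.
Qed.

Lemma equivL_odd u v i j : equivL u v -> i != j -> odd (xexp u i j) = odd (xexp v i j).
Proof.
move=> [c uv] ij.
(* at an off-diagonal slot every generator [ab|ab] has coordinate 0 or -2 *)
have offd a : (pair_of i j == pair_of a a) = false.
  by rewrite pair_of_eq; apply: contraNF ij => /orP[] /andP[/eqP-> /eqP->].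
have [z uvz] : exists z : int, (xexp u i j)%:Z - (xexp v i j)%:Z = z *+ 2.
  exists (- \sum_i0 \sum_j0 c i0 j0 * (pair_of i j == pair_of i0 j0)%:Z).
  rewrite /xexp uv -sumrN -sumrMnl; apply: eq_bigr => a _.
  rewrite -sumrN -sumrMnl; apply: eq_bigr => b _.
  by rewrite brkE !offd /= add0r mulrN mulrnAr mulNrn.
have := modn2 (xexp u i j); have := modn2 (xexp v i j).
by case: (odd (xexp u i j)); case: (odd (xexp v i j)) => //= ? ?; lia.
Qed.

Lemma parity_equiv_equivL u v : parity_equiv u v -> equivL u v.
Proof.
apply: (parity_equiv_closure (P := @equivL n)); [exact: equivL_refl | exact: equivL_sym |
  exact: equivL_trans | exact: equivL_move].
Qed.

End Lattice.

Section BinomialIdeal.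
Variables (K : fieldType) (n : nat).
Local Notation mono := 'X_{1..nvar n}.
Local Notation RR := {mpoly K[nvar n]}.
Implicit Types (i j a c k : 'I_n) (t : vidx n) (u v w : mono) (f g : RR).
Local Open Scope ring_scope.

Lemma x_pair i j : x K n i j = 'X_(slot (pair_of i j)).
Proof.
by rewrite /x (eq_bigl (pred1 (pair_of i j))) ?big_pred1_eq // => t; apply: is_pairE.
Qed.

Lemma minor2E i j : minor2 K n i j = 'X_[diag_mono i j] - 'X_[sq_mono i j].
Proof. by rewrite /minor2 !x_pair !mpolyXD expr2. Qed.

Lemma inJ0 : inJ (0 : RR).
Proof. by exists (fun _ _ => 0); rewrite big1 // => i _; rewrite big1 // => j _; rewrite mul0r. Qed.

Lemma inJD f g : inJ f -> inJ g -> inJ (f + g).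
Proof.
move=> [c ->] [d ->]; exists (fun i j => c i j + d i j).
rewrite -big_split; apply: eq_bigr => i _; rewrite -big_split.
by apply: eq_bigr => j _; rewrite mulrDl.
Qed.

Lemma inJM f g : inJ g -> inJ (f * g).
Proof.
move=> [c ->]; exists (fun i j => f * c i j).
rewrite mulr_sumr; apply: eq_bigr => i _; rewrite mulr_sumr.
by apply: eq_bigr => j _; rewrite mulrA.
Qed.

Lemma inJN f : inJ f -> inJ (- f).
Proof. by rewrite -mulN1r; apply: inJM. Qed.

Lemma inJB f g : inJ f -> inJ g -> inJ (f - g).
Proof. by move=> Jf /inJN; apply: inJD. Qed.

Lemma inJZ (e : K) f : inJ f -> inJ (e *: f).
Proof. by rewrite -mul_mpolyC; apply: inJM. Qed.

Lemma inJ_sum (I : Type) (r : seq I) (P : pred I) (F : I -> RR) :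
  (forall l, P l -> inJ (F l)) -> inJ (\sum_(l <- r | P l) F l).
Proof. by move=> JF; elim/big_rec: _ => [|l g Pl]; [apply: inJ0 | apply: inJD (JF l Pl)]. Qed.

Lemma inJ_minor f i j : (i < j)%N -> inJ (f * minor2 K n i j).
Proof.
move=> ij; exists (fun a c => if (a == i) && (c == j) then f else 0).
by rewrite sum_point.
Qed.

Lemma parity_equiv_inJ u v : parity_equiv u v -> inJ ('X_[u] - 'X_[v] : RR).
Proof.
apply: (parity_equiv_closure (P := fun u v => inJ ('X_[u] - 'X_[v] : RR))).
- by move=> u'; rewrite subrr; apply: inJ0.
- by move=> u' v' J; rewrite -opprB; apply: inJN.
- by move=> u' w' v' J1 J2; rewrite -(subrKA 'X_[w']); apply: inJD.
move=> w i j ij.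
rewrite [X in X - _]mpolyXD [X in _ - X]mpolyXD -mulrBr -opprB -minor2E.
by rewrite mulrN -mulNr; apply: inJ_minor.
Qed.

End BinomialIdeal.

Section VGrading.
Variables (K : fieldType) (n : nat).
Local Notation mono := 'X_{1..nvar n}.
Local Notation RR := {mpoly K[nvar n]}.
Implicit Types (b d : 'I_n -> nat) (u v w : mono) (f g p : RR).
Local Open Scope ring_scope.

Lemma vhomog0 b : vhomog b (0 : RR).
Proof. by move=> w; rewrite mcoeff0 eqxx. Qed.

Lemma vhomogX b w : vdeg w =1 b -> vhomog b ('X_[w] : RR).
Proof. by move=> wb w'; rewrite -mcoeff_msupp msuppX mem_seq1 => /eqP->. Qed.

Lemma vhomogD b f g : vhomog b f -> vhomog b g -> vhomog b (f + g).
Proof.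
move=> hf hg w; rewrite mcoeffD; have [f0|/hf//] := eqVneq f@_w 0.
by rewrite f0 add0r => /hg.
Qed.

Lemma vhomog_sum b (I : Type) (r : seq I) (P : pred I) (F : I -> RR) :
  (forall l, P l -> vhomog b (F l)) -> vhomog b (\sum_(l <- r | P l) F l).
Proof.
by move=> hF; elim/big_rec: _ => [|l g Pl]; [apply: vhomog0 | apply: vhomogD (hF l Pl)].
Qed.

Lemma vhomogM b d f g : vhomog b f -> vhomog d g ->
  vhomog (fun k => b k + d k)%N (f * g).
Proof.
move=> hf hg w; rewrite -mcoeff_msupp => /msuppM_le /allpairsP[[w1 w2] [/= w1f w2g ->]] k.
by rewrite vdegD (hf w1) ?(hg w2) -?mcoeff_msupp.
Qed.

Lemma vhomog_prod (I : Type) (r : seq I) (F : I -> RR) (D : I -> 'I_n -> nat) :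
  (forall l, vhomog (D l) (F l)) ->
  vhomog (fun k => \sum_(l <- r) D l k)%N (\prod_(l <- r) F l).
Proof.
move=> hF; elim: r => [|l r IH].
  move=> w; rewrite big_nil -mpolyX0 -mcoeff_msupp msuppX mem_seq1 => /eqP-> k.
  by rewrite big_nil /vdeg big1 // => t _; rewrite mnm0E.
move=> w; rewrite big_cons => /(vhomogM (hF l) IH) wE k.
by rewrite wE big_cons.
Qed.

Definition has_vdeg b w : bool := [forall k, vdeg w k == b k].

Definition vcomp b f : RR := \sum_(w <- msupp f | has_vdeg b w) f@_w *: 'X_[w].

Lemma vcomp_coef b f w : (vcomp b f)@_w = f@_w *+ has_vdeg b w.
Proof.
rewrite /vcomp raddf_sum big_mkcond /=.
rewrite (eq_bigr (fun w1 => if has_vdeg b w1 then f@_w1 * (w1 == w)%:R else 0)); last first.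
  by move=> w1 _; case: has_vdeg; rewrite ?mcoeffZ ?mcoeffX ?mcoeff0.
have [wf|wf] := boolP (w \in msupp f).
  rewrite (bigD1_seq w) ?msupp_uniq //= eqxx mulr1 big1_seq => [|w' /andP[w'w _]].
    by case: has_vdeg; rewrite addr0.
  by rewrite (negbTE w'w) mulr0 if_same.
move: wf; rewrite mcoeff_msupp negbK => /eqP f0.
rewrite f0 mul0rn big1_seq // => w' /andP[_ w'f]; case: eqP => [e|_].
  by move: w'f; rewrite e mcoeff_msupp f0 eqxx.
by rewrite mulr0 if_same.
Qed.

Fact vcomp_is_linear b : linear (vcomp b).
Proof.
move=> e f g; apply/mpolyP => w.
by rewrite mcoeffD mcoeffZ !vcomp_coef mcoeffD mcoeffZ mulrnDl mulrnAr.
Qed.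

HB.instance Definition _ b :=
  GRing.isLinear.Build K RR RR *:%R (vcomp b) (vcomp_is_linear b).

Lemma vcomp_homog b d f :
  vhomog d f -> vcomp b f = f *+ [forall k, d k == b k].
Proof.
move=> hf; apply/mpolyP => w; rewrite vcomp_coef mcoeffMn.
have [->|/hf wd] := eqVneq f@_w 0; first by rewrite !mul0rn.
by congr (_ *+ nat_of_bool _); apply: eq_forallb => k; rewrite wd.
Qed.

Lemma vcomp_id b f : vhomog b f -> vcomp b f = f.
Proof.
move=> hf; rewrite (vcomp_homog b hf).
by have -> : [forall k, b k == b k] by apply/forallP => k.
Qed.

Lemma vcomp_mul b d f p : vhomog d p ->
  vcomp b (f * p) =
  \sum_(w <- msupp f | [forall k, vdeg w k + d k == b k]) f@_w *: ('X_[w] * p).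
Proof.
move=> hp; rewrite {1}(mpolyE f) mulr_suml linear_sum [RHS]big_mkcond /=.
apply: eq_bigr => w _; rewrite -scalerAl linearZ /=.
rewrite (vcomp_homog b (vhomogM (vhomogX (frefl (vdeg w))) hp)).
by case: ifP; rewrite ?mulr1n ?mulr0n ?scaler0.
Qed.

Lemma vcomp_inJ b g : inJ g -> inJ (vcomp b g).
Proof.
move=> [c ->]; rewrite linear_sum; apply: inJ_sum => i _.
rewrite linear_sum; apply: inJ_sum => j ij; rewrite minor2E mulrBr linearB /=.
rewrite !(vcomp_mul _ _ (vhomogX (frefl _))).
have pull (P : pred mono) w' : \sum_(w <- msupp (c i j) | P w) (c i j)@_w *: ('X_[w] * 'X_[w'])
    = (\sum_(w <- msupp (c i j) | P w) (c i j)@_w *: 'X_[w]) * 'X_[w'].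
  by rewrite mulr_suml; apply: eq_bigr => w _; rewrite scalerAl.
rewrite !pull.
rewrite (eq_bigl (fun w => [forall k, vdeg w k + vdeg (sq_mono i j) k == b k]%N)).
  by rewrite -mulrBr -minor2E; apply: inJ_minor.
by move=> w; apply: eq_forallb => k; rewrite vdeg_diag_sq.
Qed.

End VGrading.

Section HilbertCriterion.
Variables (K : fieldType) (n : nat).
Local Notation mono := 'X_{1..nvar n}.
Local Notation RR := {mpoly K[nvar n]}.
Implicit Types (b d : 'I_n -> nat) (u v w : mono) (f g p : RR).
Local Open Scope ring_scope.

Definition fiber_collapsing p :=
  forall u v, vdeg u =1 vdeg v -> inJ ('X_[u] * p - 'X_[v] * p).

Lemma homog_gen_mod_line b d p : vhomog d p -> fiber_collapsing p ->
  exists Q : RR, forall f, vhomog b f -> inGen p f -> exists e : K, inJ (f - e *: Q).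
Proof.
move=> hp collapse; pose fits w := [forall k, vdeg w k + d k == b k]%N.
have reduce_gen f : vhomog b f -> inGen p f ->
    exists a : RR, inJ (f - \sum_(w <- msupp a | fits w) a@_w *: ('X_[w] * p)).
  move=> hf [a [g [fE Jg]]]; exists a.
  rewrite -(vcomp_mul b a hp) -{1}(vcomp_id hf) -linearB /= fE addrAC subrr add0r.
  exact: vcomp_inJ.
have [[w0 w0b]|none] := classic (exists w0, forall k, vdeg w0 k + d k = b k)%N.
  exists ('X_[w0] * p) => f hf Gf; have [a Ja] := reduce_gen f hf Gf.
  exists (\sum_(w <- msupp a | fits w) a@_w).
  rewrite -(subrKA (\sum_(w <- msupp a | fits w) a@_w *: ('X_[w] * p))).
  apply: inJD Ja _; rewrite scaler_suml -sumrB; apply: inJ_sum => w /forallP fw.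
  rewrite -scalerBr; apply/inJZ/collapse => k.
  by have := w0b k; move/eqP: (fw k); lia.
exists 0 => f hf Gf; exists 0; rewrite scaler0 subr0.
have [a] := reduce_gen f hf Gf; rewrite big1_seq ?subr0 // => w /andP[/forallP fw _].
by case: none; exists w => k; apply/eqP.
Qed.

Lemma no_indep_pair p b (Q : RR) :
  (forall f, vhomog b f -> inGen p f -> exists e : K, inJ (f - e *: Q)) ->
  ~ exists f : 'I_2 -> RR, indep_family p b f.
Proof.
move=> line [f [hf indep]].
have [e0 J0] := line _ (hf ord0).1 (hf ord0).2.
have [e1 J1] := line _ (hf ord_max).1 (hf ord_max).2.
have sum2 (c : 'I_2 -> K) : \sum_(l < 2) c l *: f l = c ord0 *: f ord0 + c ord_max *: f ord_max.
  by rewrite big_ord_recr big_ord1 (_ : widen_ord _ ord0 = ord0) //; apply: val_inj.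
have [e00|e0n] := eqVneq e0 0.
  have := indep (fun l => if val l == 0%N then 1 else 0); rewrite sum2 /= scale1r scale0r addr0.
  by move: J0; rewrite e00 scale0r subr0 => J0 /(_ J0 ord0) /eqP; rewrite oner_eq0.
have := indep (fun l => if val l == 0%N then e1 else - e0); rewrite sum2 /=.
have -> : e1 *: f ord0 + - e0 *: f ord_max = e1 *: (f ord0 - e0 *: Q) - e0 *: (f ord_max - e1 *: Q).
  by rewrite !scalerBr !scalerA mulrC scaleNr opprB addrA subrK addrC.
by move=> /(_ (inJB (inJZ _ J0) (inJZ _ J1)) ord_max) /eqP; rewrite oppr_eq0 (negbTE e0n).
Qed.

Lemma hilb_le1 p b :
  ~ (exists f : 'I_2 -> RR, indep_family p b f) -> hilb p b 0 \/ hilb p b 1.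
Proof.
move=> no2; have [one|none] := classic (exists f : 'I_1 -> RR, indep_family p b f).
  by right.
by left; split=> //; exists (fun _ => 0); split=> [[]|c _ []].
Qed.

Lemma hilb01_of_fiber_collapsing d p : vhomog d p -> fiber_collapsing p -> hilb01 p.
Proof.
move=> hp collapse b; have [Q line] := homog_gen_mod_line b hp collapse.
exact/hilb_le1/(no_indep_pair line).
Qed.

End HilbertCriterion.

Section ProductGenerator.
Variables (K : fieldType) (m : nat).
Local Notation n := m.+1.
Local Notation mono := 'X_{1..nvar n}.
Local Notation RR := {mpoly K[nvar n]}.
Implicit Types (a b : 'I_n) (p : 'I_n * 'I_n) (u v : mono).
Local Open Scope ring_scope.

Lemma parity_equiv_below_last u v : vdeg u =1 vdeg v ->
  (forall a b, (a < b < m)%N -> odd (xexp u a b) = odd (xexp v a b)) ->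
  parity_equiv u v.
Proof.
move=> uv low; split=> // a b ab; have [bm|mb] := ltnP b m; first by apply: low; rewrite ab.
have bE : b = ord_max by apply/val_inj/eqP; rewrite /= eqn_leq mb -ltnS ltn_ord.
have am : (a < m)%N by move: ab; rewrite bE.
have last_apart w : odd (\sum_(c | c != a) xexp w a c)%N = odd (xexp w a ord_max)
    (+) \big[addb/false]_(c | (c != a) && (c != ord_max)) odd (xexp w a c).
  by rewrite odd_sum (bigD1 ord_max) //= neq_ltn am orbT.
have := congr1 odd (uv a); rewrite bE !odd_vdeg !last_apart.
rewrite (eq_bigr (fun c => odd (xexp v a c))) => [/addIb //|c /andP[ca /negbTE cl]].
have cm : (c < m)%N by move: cl (ltn_ord c); rewrite -val_eqE /=; lia.
case: (ltngtP a c) => [ac|ca'|/val_inj ac]; first by apply: low; rewrite ac.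
  by rewrite xexpC (xexpC v) low // ca'.
by move: ca; rewrite ac eqxx.
Qed.

Definition top_mono p : mono :=
  (U_(slot (pair_of p.1 p.2)) + U_(slot (pair_of ord_max ord_max)))%MM.
Definition side_mono p : mono :=
  (U_(slot (pair_of p.1 ord_max)) + U_(slot (pair_of p.2 ord_max)))%MM.
Definition pn_factor p : RR := 'X_[top_mono p] + 'X_[side_mono p].

Definition lower_pair p : bool := (p.1 < p.2 < m)%N.

Definition pn_pairs : seq ('I_n * 'I_n) :=
  [seq (inord i, inord j) | j <- iota 0 m, i <- iota 0 j].

Lemma pnE : pn K n = \prod_(p <- pn_pairs) pn_factor p.
Proof.
have x_nat (i j : nat) : (i < n)%N -> (j < n)%N ->
    x K n i j = 'X_(slot (pair_of (inord i) (inord j))).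
  by move=> ilt jlt; rewrite -x_pair !inordK.
have lastE : inord m = ord_max :> 'I_n by apply: val_inj; rewrite /= inordK.
rewrite /pn big_allpairs_dep /index_iota !subn0 /=.
apply: eq_big_seq => j; rewrite mem_iota => /andP[_ jm].
rewrite subn0; apply: eq_big_seq => i; rewrite mem_iota => /andP[_ ij].
by rewrite /pn_factor /top_mono /side_mono !mpolyXD !x_nat -?lastE //; lia.
Qed.

Lemma mem_pn_pairs p : lower_pair p -> p \in pn_pairs.
Proof.
case: p => a b /andP[/= ab bm]; apply/allpairsPdep; exists (b : nat), (a : nat).
by rewrite !mem_iota /= ab bm !inord_val.
Qed.

Lemma pn_pairs_lower : all lower_pair pn_pairs.
Proof.
apply/allP => _ /allpairsPdep[j [i [+ + ->]]]; rewrite !mem_iota /= => jm ij.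
by rewrite /lower_pair /= !inordK; lia.
Qed.

Lemma vdeg_top_side p : vdeg (top_mono p) =1 vdeg (side_mono p).
Proof. by move=> k; rewrite !vdegD !vdeg_unit; lia. Qed.

Lemma pn_factor_homog p : vhomog (vdeg (top_mono p)) (pn_factor p).
Proof.
exact: vhomogD (vhomogX (frefl _)) (vhomogX (fsym (vdeg_top_side p))).
Qed.

Lemma odd_xexp_top p a b : (p.1 < p.2)%N -> (a < b < m)%N ->
  odd (xexp (top_mono p) a b) = (p == (a, b)).
Proof.
case: p => [p1 p2] /= p12 /andP[ab bm].
rewrite xexpD !xexp_unit !pair_of_eq xpair_eqE -!val_eqE /=.
have -> : ((p1 : nat) == b) && ((p2 : nat) == a) = false by lia.
have -> : (m == a) && (m == b) || (m == b) && (m == a) = false by lia.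
by rewrite orbF addn0; case: (_ && _).
Qed.

Lemma xexp_side p a b : (a < b < m)%N -> xexp (side_mono p) a b = 0%N.
Proof.
case/andP=> ab bm; rewrite xexpD !xexp_unit !pair_of_eq -!val_eqE /=.
by rewrite !(_ : forall c : nat, (c == a) && (m == b) || (c == b) && (m == a) = false) //; lia.
Qed.

Lemma pn_factor_mulB p Y1 Y2 u v : 'X_[Y1] + 'X_[Y2] = pn_factor p ->
  pn_factor p * ('X_[u] - 'X_[v]) =
  ('X_[u + top_mono p] - 'X_[v + Y1]) + ('X_[u + side_mono p] - 'X_[v + Y2]).
Proof.
move=> Y12; rewrite mulrBr {1}/pn_factor -Y12.
by rewrite !(@mpolyXD _ _ u) !(@mpolyXD _ _ v); ring.
Qed.

Lemma pn_factors_collapse (L : seq ('I_n * 'I_n)) : all lower_pair L ->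
  forall u v, vdeg u =1 vdeg v ->
  (forall a b, (a < b < m)%N -> odd (xexp u a b) != odd (xexp v a b) -> (a, b) \in L) ->
  inJ (\prod_(p <- L) pn_factor p * ('X_[u] - 'X_[v])).
Proof.
elim: L => [|p L IH] /=.
  move=> _ u v uv diff; rewrite big_nil mul1r.
  apply: parity_equiv_inJ; apply: parity_equiv_below_last => // a b abm.
  by apply/eqP/negPn/negP => /(diff a b abm).
case/andP=> /andP[p12 p2m] lowL u v uv diff; rewrite big_cons -mulrA mulrCA.
pose flip := odd (xexp u p.1 p.2) != odd (xexp v p.1 p.2).
have step X Y : vdeg X =1 vdeg Y ->
    (forall a b, (a < b < m)%N -> odd (xexp X a b) (+) odd (xexp Y a b) = (p == (a, b)) && flip) ->
    inJ (\prod_(q <- L) pn_factor q * ('X_[u + X] - 'X_[v + Y])).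
  move=> XY oXY; apply: IH => // [k|a b abm]; first by rewrite !vdegD uv XY.
  have addbNE x y z w : (x (+) y != z (+) w) = (x != z) (+) (y (+) w).
    by case: x; case: y; case: z; case: w.
  rewrite !xexpD !oddD addbNE oXY //.
  case: (eqVneq p (a, b)) => [pE|pne]; first by rewrite /flip pE /= addbb.
  rewrite andFb addbF => /(diff a b abm); rewrite in_cons => /orP[/eqP abp|//].
  by move: pne; rewrite abp eqxx.
(* pair x^top with x^side across the difference iff u and v differ in parity at p *)
case flipE : flip.
  rewrite (pn_factor_mulB (Y1 := side_mono p) (Y2 := top_mono p)); last exact: addrC.
  rewrite mulrDr; apply: inJD.
    apply: step (vdeg_top_side p) _ => a b abm.
    by rewrite odd_xexp_top ?xexp_side // flipE addbF andbT.
  apply: step (fsym (vdeg_top_side p)) _ => a b abm.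
  by rewrite odd_xexp_top ?xexp_side // flipE andbT.
rewrite (pn_factor_mulB (Y1 := top_mono p) (Y2 := side_mono p)) // mulrDr.
apply: inJD; apply: step => // a b abm.
  by rewrite odd_xexp_top // addbb flipE andbF.
by rewrite xexp_side // flipE andbF.
Qed.

Lemma hilb01_pn : hilb01 (pn K n).
Proof.
rewrite pnE; apply: (hilb01_of_fiber_collapsing (vhomog_prod pn_factor_homog)) => u v uv.
rewrite -mulrBl mulrC; apply: (pn_factors_collapse pn_pairs_lower uv).
by move=> a b abm _; apply: mem_pn_pairs.
Qed.

End ProductGenerator.

Section ClassSum.
Variables (n : nat) (b : 'I_n -> nat).
Local Notation mono := 'X_{1..nvar n}.
Implicit Types (a c k : 'I_n) (u v w s : mono).
Hypothesis b_large : forall k, (n - 2 <= b k)%N.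

Lemma fiber_offdiag_exists (P : 'I_n -> 'I_n -> bool) :
  (forall a c, P a c = P c a) -> (forall k, P k k = false) ->
  (forall k, odd (\sum_c P k c) = odd (b k)) ->
  exists w, in_fiber b w /\ forall a c, a != c -> xexp w a c = P a c.
Proof.
move=> Psym Pdiag Podd.
(* The diagonal exponent x_kk takes up half of the remaining degree; this is a
   natural number because \sum_c P k c <= n - 1 has the parity of b k >= n - 2. *)
pose W (t : vidx n) : nat :=
  if (val t).1 == (val t).2 then ((b (val t).1 - \sum_c P (val t).1 c)./2)%N
  else P (val t).1 (val t).2.
pose w : mono := [multinom W (enum_val s) | s < nvar n].
have wE a c : xexp w a c = W (pair_of a c) by rewrite /xexp mnmE /slot enum_rankK.
have off a c : a != c -> xexp w a c = P a c.
  move=> ac; rewrite wE /W pair_ofE.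
  by case: leqP => _ /=; rewrite ?(negbTE ac) 1?eq_sym ?(negbTE ac) // Psym.
exists w; split=> // k; rewrite vdegE wE /W pair_ofE leqnn /= eqxx.
have -> : (\sum_(c | c != k) xexp w k c = \sum_c P k c)%N.
  by rewrite [RHS](bigD1 k) //= Pdiag; apply: eq_bigr => c ck; rewrite off // eq_sym.
have Pn : (\sum_c P k c <= n.-1)%N.
  rewrite (bigD1 k) //= Pdiag add0n.
  apply: (@leq_trans (\sum_(c | c != k) 1)%N); first by apply: leq_sum => c _; apply: leq_b1.
  by rewrite sum1_card cardC1 card_ord.
have Pb : (\sum_c P k c <= b k)%N.
  have := b_large k; have := modn2 (\sum_c P k c); have := modn2 (b k); rewrite Podd; lia.
by rewrite -[X in (_ = X)%N](subnK Pb) -{2}(odd_double_half (b k - _)) oddB // Podd addbb.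
Qed.

Variables (K : fieldType) (S : seq mono).
Hypothesis S_reps : class_reps b S.

Definition parity_shift u v s s' : bool :=
  [forall a : 'I_n, forall c : 'I_n, (a < c)%N ==>
     (odd (xexp s' a c) == odd (xexp s a c) (+) odd (xexp u a c) (+) odd (xexp v a c))].

Lemma has_parity_shift u v s : vdeg u =1 vdeg v -> s \in S -> has (parity_shift u v s) S.
Proof.
case: S_reps => _ S_fiber S_cover _ uv sS.
pose P a c := (a != c) && (odd (xexp s a c) (+) odd (xexp u a c) (+) odd (xexp v a c)).
have [|||w [wb wP]] := fiber_offdiag_exists (P := P).
- by move=> a c; rewrite /P eq_sym (xexpC s) (xexpC u) (xexpC v).
- by move=> k; rewrite /P eqxx.
- move=> k; have := congr1 odd (uv k); rewrite -(S_fiber s sS k) !odd_vdeg !odd_sum => ouv.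
  rewrite (eq_bigr (fun c => if c != k then
      odd (xexp s k c) (+) odd (xexp u k c) (+) odd (xexp v k c) else false)); last first.
    by move=> c _; rewrite /P oddb eq_sym; case: (c != k).
  by rewrite -big_mkcond !big_split /= ouv -addbA addbb addbF.
have [s' s'S ws'] := S_cover w wb.
apply/hasP; exists s' => //; apply/forallP => a; apply/forallP => c; apply/implyP => ac.
have ac' : a != c by rewrite neq_ltn ac.
by rewrite -(equivL_odd ws' ac') wP // /P ac' oddb.
Qed.

Lemma class_shift u v : vdeg u =1 vdeg v ->
  exists2 sigma : mono -> mono,
    {in S, forall s, sigma s \in S /\ parity_equiv (s + u)%MM (sigma s + v)%MM}
    & {in S &, injective sigma}.
Proof.
move=> uv; case: S_reps => _ S_fiber _ S_sep.
pose sigma s := nth s S (find (parity_shift u v s) S).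
have sigmaS s : s \in S -> sigma s \in S /\ parity_shift u v s (sigma s).
  move=> sS; have hs := has_parity_shift uv sS.
  by split; [apply: mem_nth; rewrite -has_find | apply: nth_find].
have odd_sigma s a c : s \in S -> (a < c)%N ->
    odd (xexp (sigma s) a c) = odd (xexp s a c) (+) odd (xexp u a c) (+) odd (xexp v a c).
  by move=> /sigmaS[_ /forallP/(_ a)/forallP/(_ c)/implyP ps] /ps/eqP.
exists sigma => [s sS|s1 s2 s1S s2S e].
  split; first by case: (sigmaS s sS).
  split=> [k|a c ac]; first by rewrite !vdegD (S_fiber s sS) (S_fiber _ (sigmaS s sS).1) uv.
  by rewrite !xexpD !oddD odd_sigma // -!addbA addbb addbF.
apply: S_sep => //; apply: parity_equiv_equivL.
split=> [k|a c ac]; first by rewrite (S_fiber s1 s1S) (S_fiber s2 s2S).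
by have := odd_sigma s1 a c s1S ac; rewrite e odd_sigma // => /addIb/addIb ->.
Qed.

Lemma hilb01_class_sum : hilb01 (\sum_(s <- S) 'X_[s] : {mpoly K[nvar n]}).
Proof.
case: (S_reps) => S_uniq S_fiber _ _.
have sum_homog : vhomog b (\sum_(s <- S) 'X_[s] : {mpoly K[nvar n]}).
  by rewrite big_seq; apply: vhomog_sum => s /S_fiber/vhomogX.
apply: (hilb01_of_fiber_collapsing sum_homog) => u v uv.
have [sigma sigmaS sigma_inj] := class_shift uv.
have sigma_perm : perm_eq (map sigma S) S.
  have uniq_map : uniq (map sigma S) by rewrite map_inj_in_uniq.
  apply: uniq_perm => //; apply: (uniq_min_size uniq_map _ _).2; last by rewrite size_map.
  by move=> _ /mapP[s sS ->]; case: (sigmaS s sS).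
rewrite -[X in (_ - _ * X)%R](perm_big _ sigma_perm) big_map !mulr_sumr -sumrB big_seq.
apply: inJ_sum => s sS; rewrite mulrC [X in (_ - X)%R]mulrC -!mpolyXD.
exact/parity_equiv_inJ/(sigmaS s sS).2.
Qed.

End ClassSum.

Unset Implicit Arguments.

Theorem lemma2p19 (K : fieldType) (n : nat) : (2 <= n)%N ->
  hilb01 (pn K n) /\
  (forall (i : 'I_n) (S : seq ('X_{1..nvar n})),
      class_reps (plus_deg i) S ->
      hilb01 (\sum_(s <- S) ('X_[s] : {mpoly K[nvar n]}))).
Proof.
case: n => [//|m] _; split=> [|i S reps]; first exact: hilb01_pn.
by apply: hilb01_class_sum reps => k; rewrite /plus_deg; case: odd; lia.
Qed.
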